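(* Let $U$ be a nonempty finite set, $R\subseteq U\times U$ serial and transitive, and $r$ the rank function of the matroid $M(Reg(U,R))$. Then $r(X)=h(X)$ for every $X\in Reg(U,R)$.
   Context: $R_s(x)=\{y\in U\mid xRy\}$; $\underline{R}(X)=\{x\mid R_s(x)\subseteq X\}$, $\overline{R}(X)=\{x\mid R_s(x)\cap X\neq\emptyset\}$; $X$ is regular if $X=\underline{R}(\overline{R}(X))$, and $Reg(U,R)$ is the lattice of regular sets under inclusion, with least element $\emptyset$. $h(A)$ is the length of a maximal chain in $[\emptyset,A]$. $M(Reg(U,R))$ is the matroid on $U$ with independent sets $\mathbf{I}(Reg(U,R);h)=\{X\subseteq U\mid h(Y)\ge|X\cap Y|\ \forall Y\in Reg(U,R)\}$; its rank function is $r(X)=\max\{|I|\mid I\subseteq X,\ I\in\mathbf{I}\}$. *)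

From mathcomp Require Import all_boot.
Set Implicit Arguments. Unset Strict Implicit. Unset Printing Implicit Defensive.

Section RoughDefs.
Variables (U : finType) (R : rel U).

Definition Rs (x : U) : {set U} := [set y | R x y].

Definition lower_apx (X : {set U}) : {set U} := [set x | Rs x \subset X].
Definition upper_apx (X : {set U}) : {set U} := [set x | Rs x :&: X != set0].

Definition regular (X : {set U}) : bool := X == lower_apx (upper_apx X).

Definition reg_chain_below (A : {set U}) (C : {set {set U}}) : bool :=
  [forall Y in C, regular Y && (Y \subset A)] &&
  [forall Y in C, forall Z in C, (Y \subset Z) || (Z \subset Y)].

Definition h (A : {set U}) : nat :=
  \max_(C : {set {set U}} | reg_chain_below A C) (#|C|).-1.

Definition indep (X : {set U}) : bool :=
  [forall Y : {set U}, regular Y ==> (#|X :&: Y| <= h Y)].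

Definition rank (X : {set U}) : nat :=
  \max_(I : {set U} | (I \subset X) && indep I) #|I|.

End RoughDefs.

Definition serial (U : Type) (R : rel U) : Prop := forall x, exists y, R x y.

From mathcomp Require Import all_boot.
Set Implicit Arguments. Unset Strict Implicit. Unset Printing Implicit Defensive.

(* - rank X <= h X is immediate: an independent I inside X meets the regular
     set X in #|I| <= h X points.
   - h X <= rank X: given a chain C of regular subsets of X with #|C| = n+1,
     we build (purely combinatorially, by peeling off the maximum of C) a set
     I of n points of the union of C such that, for every set Y, I meets Y in
     fewer points than there are distinct traces Y :&: Z (Z in C).  The
     traces of C on a regular Y form a chain of regular sets below Y, because
     regular sets are closed under intersection; hence #|I :&: Y| <= h Y,
     i.e. I is independent, and #|I| = n <= rank X.
   Closure of regular sets under intersection is where seriality and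
   transitivity are used: every point has a successor t all of whose
   successors have the same successor set as t, and a regular set containing
   a predecessor of such a t contains all successors of t. *)

Section Regularity.
Variables (U : finType) (R : rel U).

Lemma lower_upperP (Z : {set U}) x :
  reflect (forall y, R x y -> exists2 z, R y z & z \in Z)
          (x \in lower_apx R (upper_apx R Z)).
Proof.
rewrite inE; apply: (iffP subsetP) => [sub y Rxy | H y].
  have := sub y; rewrite !inE => /(_ Rxy) /set0Pn [z].
  by rewrite !inE => /andP[Ryz zZ]; exists z.
rewrite !inE => /H [z Ryz zZ]; apply/set0Pn; exists z.
by rewrite !inE Ryz.
Qed.

Lemma lower_upperS (A B : {set U}) : A \subset B ->
  lower_apx R (upper_apx R A) \subset lower_apx R (upper_apx R B).
Proof.
move=> /subsetP sAB; apply/subsetP => x /lower_upperP H.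
by apply/lower_upperP => y /H [z Ryz /sAB zB]; exists z.
Qed.

Lemma regular_mem (Z : {set U}) x : regular R Z ->
  (x \in Z) = (x \in lower_apx R (upper_apx R Z)).
Proof. by move/eqP=> {1}->. Qed.

Hypotheses (R_serial : serial R) (R_trans : transitive R).

(* Every point x has a successor t lying in a "terminal cluster": all
   successors of t have the same successor set as t.  Take t with a minimal
   successor set among the successors of x. *)
Lemma terminal_successor x :
  exists2 t, R x t & forall w, R t w -> Rs R w = Rs R t.
Proof.
have [y0 Rxy0] := R_serial x.
have [t Rxt min_t] := arg_minnP (fun t => #|Rs R t|) Rxy0.
exists t => // w Rtw; apply/eqP; rewrite eqEcard min_t ?andbT.
  by apply/subsetP => v; rewrite !inE => /(R_trans Rtw).
exact: R_trans Rxt Rtw.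
Qed.

Lemma regular_cluster (Z : {set U}) x t : regular R Z -> x \in Z -> R x t ->
  (forall w, R t w -> Rs R w = Rs R t) -> Rs R t \subset Z.
Proof.
move=> rZ xZ Rxt cluster_t.
move: xZ; rewrite (regular_mem _ rZ) => /lower_upperP /(_ t Rxt) [z Rtz zZ].
apply/subsetP => w; rewrite inE => Rtw; rewrite (regular_mem _ rZ).
apply/lower_upperP => v Rwv; exists z => //.
have Rtv : R t v.
  have : v \in Rs R w by rewrite inE.
  by rewrite cluster_t // inE.
have : z \in Rs R t by rewrite inE.
by rewrite -(cluster_t v Rtv) inE.
Qed.

Lemma regularI (X Y : {set U}) :
  regular R X -> regular R Y -> regular R (X :&: Y).
Proof.
move=> rX rY; rewrite /regular eqEsubset; apply/andP; split.
  apply/subsetP => x /setIP [xX xY]; apply/lower_upperP => y Rxy.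
  have [t Ryt cluster_t] := terminal_successor y.
  have Rxt := R_trans Rxy Ryt.
  have [z Rtz] := R_serial t.
  have inRs_t (Z : {set U}) : regular R Z -> x \in Z -> z \in Z.
    move=> rZ xZ; apply: (subsetP (regular_cluster rZ xZ Rxt cluster_t)).
    by rewrite inE.
  by exists z; [exact: R_trans Ryt Rtz | rewrite inE (inRs_t X) ?(inRs_t Y)].
apply/subsetP => x x_cl; rewrite inE (regular_mem _ rX) (regular_mem _ rY).
by rewrite !(subsetP (lower_upperS _) x x_cl) ?subsetIl ?subsetIr.
Qed.

End Regularity.

Section Chains.
Variable T : finType.
Implicit Types (C D : {set {set T}}) (Y Z : {set T}).

Definition chain C := {in C &, forall Y Z, (Y \subset Z) || (Z \subset Y)}.

Definition trace Y C : {set {set T}} := [set Y :&: Z | Z in C].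

Lemma chainS C D : D \subset C -> chain C -> chain D.
Proof. by move=> /subsetP sDC cC Y Z /sDC YC /sDC ZC; exact: cC. Qed.

Lemma chain_trace Y C : chain C -> chain (trace Y C).
Proof.
move=> cC _ _ /imsetP [Z ZC ->] /imsetP [Z' Z'C ->].
by case/orP: (cC Z Z' ZC Z'C) => s; apply/orP; [left | right]; exact: setIS.
Qed.

Lemma chain_max C : chain C -> C != set0 ->
  exists2 M, M \in C & forall Z, Z \in C -> Z \subset M.
Proof.
move=> cC /set0Pn [Z0 Z0C].
have [M MC maxM] := arg_maxnP (fun M : {set T} => #|M|) Z0C.
exists M => // Z ZC; case/orP: (cC Z M ZC MC) => // sMZ.
suff /eqP-> : M == Z by [].
by rewrite eqEcard sMZ; exact: maxM.
Qed.

Lemma chain_peel C n : chain C -> #|C| = n.+2 ->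
  exists M x, [/\ M \in C, x \in M & x \notin \bigcup_(Z in C :\ M) Z].
Proof.
move=> cC cardC.
have [M MC maxM] : exists2 M, M \in C & forall Z, Z \in C -> Z \subset M.
  by apply: chain_max; rewrite // -card_gt0 cardC.
have cC' : chain (C :\ M) by apply: chainS cC; exact: subsetDl.
have [M' M'C' maxM'] : exists2 M', M' \in C :\ M &
    forall Z, Z \in C :\ M -> Z \subset M'.
  apply: chain_max; rewrite // -card_gt0.
  by move: cardC; rewrite (cardsD1 M C) MC add1n => -[->].
have /properP [_ [x xM xM']] : M' \proper M.
  by move: M'C' => /setD1P [M'M /maxM sM'M]; rewrite properEneq M'M.
exists M, x; split=> //; apply/bigcupP => -[Z /maxM' /subsetP sZM' xZ].
by rewrite sZM' in xM'.
Qed.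

Lemma chain_transversal n C : chain C -> #|C| = n.+1 ->
  exists I : {set T}, [/\ #|I| = n, I \subset \bigcup_(Z in C) Z &
    forall Y, #|I :&: Y| < #|trace Y C|].
Proof.
elim: n C => [|n IH] C cC cardC.
  exists set0; split; rewrite ?cards0 ?sub0set // => Y.
  have /set0Pn [Z ZC] : C != set0 by rewrite -card_gt0 cardC.
  by rewrite set0I cards0 card_gt0; apply/set0Pn; exists (Y :&: Z); exact: imset_f.
have [M [x [MC xM xC']]] := chain_peel cC cardC.
have cardC' : #|C :\ M| = n.+1.
  by move: cardC; rewrite (cardsD1 M C) MC add1n => -[].
have [I [cardI sI traceI]] := IH _ (chainS (subsetDl C [set M]) cC) cardC'.
have xI : x \notin I by apply: contra xC' => /(subsetP sI).
exists (x |: I); split.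
- by rewrite cardsU1 xI cardI.
- rewrite subUset sub1set; apply/andP; split; first by apply/bigcupP; exists M.
  apply: subset_trans sI _; apply/bigcupsP => Z /setD1P [_ ZC].
  exact: bigcup_sup.
move=> Y; case xY: (x \in Y).
  have xIY : (x |: I) :&: Y = x |: (I :&: Y).
    by apply/setP => z; rewrite !inE; case: eqP => // ->; rewrite xY.
  have new_trace : Y :&: M \notin trace Y (C :\ M).
    apply/imsetP => -[Z ZC' EZ]; have : x \in Y :&: M by rewrite inE xY.
    by rewrite EZ => /setIP [_ xZ]; case/bigcupP: xC'; exists Z.
  have traceE : trace Y C = (Y :&: M) |: trace Y (C :\ M).
    by rewrite -{1}(setD1K MC) /trace imsetU1.
  have xIY' : x \notin I :&: Y by rewrite inE (negbTE xI).
  by rewrite xIY traceE !cardsU1 new_trace xIY' ltn_add2l traceI.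
have xIY : (x |: I) :&: Y = I :&: Y.
  by apply/setP => z; rewrite !inE; case: eqP => // ->; rewrite xY (negbTE xI).
rewrite xIY; apply: leq_trans (traceI Y) _.
by apply: subset_leq_card; apply: imsetS; exact: subsetDl.
Qed.

End Chains.

Section RankHeight.
Variables (U : finType) (R : rel U).

Lemma reg_chain_belowP (A : {set U}) (C : {set {set U}}) :
  reflect ({in C, forall Y, regular R Y && (Y \subset A)} /\ chain C)
          (reg_chain_below R A C).
Proof.
apply: (iffP andP) => [[/forallP regC /forallP cC] | [regC cC]]; split.
- by move=> Y YC; have := regC Y; rewrite YC.
- by move=> Y Z YC ZC; have := cC Y; rewrite YC => /forallP /(_ Z); rewrite ZC.
- by apply/forallP => Y; apply/implyP; exact: regC.
by apply/forallP => Y; apply/implyP => YC; apply/forallP => Z; apply/implyP;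
   exact: cC.
Qed.

Lemma chain_le_h (A : {set U}) (C : {set {set U}}) :
  reg_chain_below R A C -> (#|C|).-1 <= h R A.
Proof. exact: leq_bigmax_cond. Qed.

Lemma rank_le_h (X : {set U}) : regular R X -> rank R X <= h R X.
Proof.
move=> rX; apply/bigmax_leqP => I /andP [sIX /forallP /(_ X)].
by rewrite rX (setIidPl sIX).
Qed.

Hypotheses (R_serial : serial R) (R_trans : transitive R).

Lemma trace_reg_chain (A Y : {set U}) (C : {set {set U}}) :
  regular R Y -> reg_chain_below R A C -> reg_chain_below R Y (trace Y C).
Proof.
move=> rY /reg_chain_belowP [regC cC]; apply/reg_chain_belowP.
split; last exact: chain_trace.
move=> _ /imsetP [Z ZC ->]; rewrite subsetIl andbT.
by apply: regularI => //; case/andP: (regC Z ZC).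
Qed.

Lemma h_le_rank (X : {set U}) : h R X <= rank R X.
Proof.
apply/bigmax_leqP => C chainC; have /reg_chain_belowP [regC cC] := chainC.
case cardC: #|C| => [|n] //=.
have [I [cardI sI traceI]] := chain_transversal cC cardC.
rewrite -cardI; apply: leq_bigmax_cond; apply/andP; split.
  apply: subset_trans sI _; apply/bigcupsP => Z ZC.
  by case/andP: (regC Z ZC).
apply/forallP => Y; apply/implyP => rY.
apply: leq_trans (chain_le_h (trace_reg_chain rY chainC)).
by rewrite -ltnS prednK // (leq_ltn_trans _ (traceI Y)).
Qed.

End RankHeight.

Theorem proposition4 (U : finType) (R : rel U) :
  0 < #|U| -> serial R -> transitive R ->
  forall X : {set U}, regular R X -> rank R X = h R X.
Proof.
move=> _ R_serial R_trans X rX; apply/eqP; rewrite eqn_leq.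
by rewrite rank_le_h //= h_le_rank.
Qed.
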